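(* Let $A$ be a commutative ring and $L$ a nonempty set of ideals of $A$ closed under finite sums and finite intersections, with the intersection of all elements of $L$ equal to $\{0\}$. Let $B$ be a commutative ring containing $A$. Assume that each torsion $A$-module is equipped with a $B$-module structure extending its $A$-module structure, and that each $A$-linear map between torsion $A$-modules is $B$-linear. Then there is a unique $A$-algebra morphism $f:B\to A^\omega$ such that $b\,v=f(b)\,v$ for every vector $v$ of every torsion $A$-module and every $b\in B$.
   Context: $A^\omega$ is the ring whose elements are represented by families $(a_I)_{I\in L}$ of elements of $A$ such that $I\subset J\Rightarrow a_I\equiv a_J\bmod J$; two families $(a_I)$, $(b_I)$ represent the same element iff $a_I\equiv b_I\bmod I$ for all $I\in L$; operations componentwise; $A\subset A^\omega$ via constant families. An $A$-module is torsion if each vector is annihilated by some $I\in L$. A torsion $A$-module $V$ is an $A^\omega$-module via $a v:=a_I v$ whenever $I\in L$ and $Iv=0$. *)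

From HB Require Import structures.
From mathcomp Require Import all_boot all_order all_algebra.
Set Implicit Arguments. Unset Strict Implicit. Unset Printing Implicit Defensive.
Import GRing.Theory.
Local Open Scope ring_scope.

Definition is_ideal (A : comPzRingType) (I : A -> Prop) : Prop :=
  I 0 /\ (forall a b, I a -> I b -> I (a + b)) /\ (forall r a, I a -> I (r * a)).

Definition ideal_sum (A : comPzRingType) (I J : A -> Prop) : A -> Prop :=
  fun c => exists a b, I a /\ J b /\ c = a + b.

Definition ideal_cap (A : comPzRingType) (I J : A -> Prop) : A -> Prop :=
  fun c => I c /\ J c.

Definition good_ideal_set (A : comPzRingType) (L : (A -> Prop) -> Prop) : Prop :=
  (exists I, L I) /\
  (forall I, L I -> is_ideal I) /\
  (forall I J, L I -> L J ->
     exists K, L K /\ forall c, K c <-> ideal_sum I J c) /\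
  (forall I J, L I -> L J ->
     exists K, L K /\ forall c, K c <-> ideal_cap I J c) /\
  (forall a : A, (forall I, L I -> I a) -> a = 0).

Definition torsion (A : comPzRingType) (L : (A -> Prop) -> Prop) (V : lmodType A)
  : Prop :=
  forall v : V, exists I, L I /\ forall a, I a -> a *: v = 0.

(* Representatives of elements of A^omega: families (a_I)_{I in L}
   (values at predicates not in L are irrelevant) such that
   I ⊂ J -> a_I ≡ a_J mod J. *)
Definition omega_fam (A : comPzRingType) (L : (A -> Prop) -> Prop)
  (x : (A -> Prop) -> A) : Prop :=
  forall I J, L I -> L J -> (forall a, I a -> J a) -> J (x I - x J).

Definition omega_eq (A : comPzRingType) (L : (A -> Prop) -> Prop)
  (x y : (A -> Prop) -> A) : Prop :=
  forall I, L I -> I (x I - y I).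

Definition omega_add (A : comPzRingType) (x y : (A -> Prop) -> A) :=
  fun I => x I + y I.
Definition omega_mul (A : comPzRingType) (x y : (A -> Prop) -> A) :=
  fun I => x I * y I.
Definition omega_const (A : comPzRingType) (a : A) : (A -> Prop) -> A :=
  fun _ => a.

Definition omega_alg_morph (A B : comPzRingType) (iota : {rmorphism A -> B})
  (L : (A -> Prop) -> Prop) (f : B -> (A -> Prop) -> A) : Prop :=
  (forall b, omega_fam L (f b)) /\
  (forall b c, omega_eq L (f (b + c)) (omega_add (f b) (f c))) /\
  (forall b c, omega_eq L (f (b * c)) (omega_mul (f b) (f c))) /\
  omega_eq L (f 1) (omega_const 1) /\
  (forall a, omega_eq L (f (iota a)) (omega_const a)).

Definition B_structures (A B : comPzRingType) (iota : {rmorphism A -> B})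
  (L : (A -> Prop) -> Prop) (act : forall V : lmodType A, B -> V -> V) : Prop :=
  forall V : lmodType A, torsion L V ->
    (forall (b : B) (v w : V), act V b (v + w) = act V b v + act V b w) /\
    (forall (b c : B) (v : V), act V (b + c) v = act V b v + act V c v) /\
    (forall (b c : B) (v : V), act V (b * c) v = act V b (act V c v)) /\
    (forall v : V, act V 1 v = v) /\
    (forall (a : A) (v : V), act V (iota a) v = a *: v).

Definition linear_maps_B_linear (A B : comPzRingType)
  (L : (A -> Prop) -> Prop) (act : forall V : lmodType A, B -> V -> V) : Prop :=
  forall (V W : lmodType A) (h : {linear V -> W}), torsion L V -> torsion L W ->
    forall (b : B) (v : V), h (act V b v) = act W b (h v).

(* b v = f(b) v, where the A^omega-action on a torsion module is
   x v := x_I v whenever I in L and I v = 0. *)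
Definition acts_through (A B : comPzRingType) (L : (A -> Prop) -> Prop)
  (act : forall V : lmodType A, B -> V -> V) (f : B -> (A -> Prop) -> A) : Prop :=
  forall V : lmodType A, torsion L V ->
    forall (b : B) (v : V) (I : A -> Prop), L I -> (forall a, I a -> a *: v = 0) ->
      act V b v = f b I *: v.

From HB Require Import structures.
From mathcomp Require Import all_boot all_order all_algebra.
From mathcomp Require Import boolp.
Set Implicit Arguments. Unset Strict Implicit. Unset Printing Implicit Defensive.
Import GRing.Theory.
Local Open Scope ring_scope.
Local Open Scope quotient_scope.

(* For I in L, the action of b on the cyclic torsion module A/I is
   multiplication by f(b)_I, a representative of b.1.  A vector v killed by I
   is the image of 1 under the A-linear map A/I -> V, x |-> x v, which is
   B-linear by hypothesis, so b v = f(b)_I v.  The B-module axioms on the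
   modules A/I make f an A-algebra morphism, and computing b.1 in A/J through
   a smaller ideal I <= J gives the compatibility f(b)_I = f(b)_J mod J.
   Uniqueness is the same computation on 1 in A/I. *)

Section IdealFacts.
Variables (A : comPzRingType) (I : A -> Prop).
Hypothesis idealI : is_ideal I.

Lemma ideal0 : I 0.
Proof. by case: idealI. Qed.

Lemma idealD a b : I a -> I b -> I (a + b).
Proof. by case: idealI => _ [I_add _]; apply: I_add. Qed.

Lemma idealMl r a : I a -> I (r * a).
Proof. by case: idealI => _ [_ I_mul]; apply: I_mul. Qed.

Lemma idealN a : I a -> I (- a).
Proof. by rewrite -mulN1r; apply: idealMl. Qed.

Lemma idealB a b : I a -> I b -> I (a - b).
Proof. by move=> Ia Ib; apply: idealD => //; apply: idealN. Qed.

End IdealFacts.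

(* Quotienting by the ideal generated by I makes [quot_mod I] an A-module for
   every predicate I, so that [omega_of_act] below is a total function; for an
   ideal I it is the usual A/I. *)
Definition ideal_closure (A : comPzRingType) (I : A -> Prop) : A -> Prop :=
  fun a => forall J, is_ideal J -> (forall x, I x -> J x) -> J a.

Section IdealClosure.
Variables (A : comPzRingType) (I : A -> Prop).

Lemma ideal_closure_ideal : is_ideal (ideal_closure I).
Proof.
split; first by move=> J /ideal0.
split=> [a b Ia Ib J hJ IJ | r a Ia J hJ IJ].
  by apply: idealD => //; [apply: Ia | apply: Ib].
by apply: idealMl => //; apply: Ia.
Qed.

Lemma sub_ideal_closure a : I a -> ideal_closure I a.
Proof. by move=> Ia J _; apply. Qed.

Lemma ideal_closure_id a : is_ideal I -> ideal_closure I a -> I a.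
Proof. by move=> idealI; apply. Qed.

Lemma ideal_closure_min (J : A -> Prop) : is_ideal J -> (forall a, I a -> J a) ->
  forall a, ideal_closure I a -> J a.
Proof. by move=> idealJ IJ a; apply. Qed.

Definition ideal_closure_pred : {pred A} := fun a => `[< ideal_closure I a >].

Lemma ideal_closure_zmod_closed : zmod_closed ideal_closure_pred.
Proof.
split=> [|a b /asboolP Ia /asboolP Ib]; apply/asboolP.
  exact: ideal0 ideal_closure_ideal.
exact: idealB ideal_closure_ideal _ _ Ia Ib.
Qed.

HB.instance Definition _ := GRing.isZmodClosed.Build A ideal_closure_pred
  ideal_closure_zmod_closed.

Definition quot_mod := {ideal_quot ideal_closure_pred}.
HB.instance Definition _ := Choice.on quot_mod.
HB.instance Definition _ := GRing.Zmodule.on quot_mod.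
HB.instance Definition _ := EqQuotient.on quot_mod.

Lemma quot_mod_eqP (x y : A) : \pi_quot_mod x = \pi y <-> ideal_closure I (x - y).
Proof. by rewrite (rwP eqP) piE Quotient.equivE; split=> /asboolP. Qed.

Definition quot_scale (a : A) := lift_op1 quot_mod ( *%R a).

Lemma pi_scale a : {morph \pi_quot_mod : x / a * x >-> quot_scale a x}.
Proof.
move=> x; unlock quot_scale; apply/quot_mod_eqP.
rewrite -mulrBr; apply: idealMl ideal_closure_ideal _ _ _.
by apply/quot_mod_eqP; rewrite reprK.
Qed.
Canonical pi_scale_morph a := PiMorph1 (pi_scale a).

Lemma quot_scaleA a b x : quot_scale a (quot_scale b x) = quot_scale (a * b) x.
Proof. by rewrite -[x]reprK !piE mulrA. Qed.

Lemma quot_scale1 : left_id 1 quot_scale.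
Proof. by move=> x; rewrite -[x]reprK !piE mul1r. Qed.

Lemma quot_scaleDr : right_distributive quot_scale +%R.
Proof. by move=> a x y; rewrite -[x]reprK -[y]reprK !piE mulrDr. Qed.

Lemma quot_scaleDl x : {morph quot_scale^~ x : a b / a + b}.
Proof. by move=> a b; rewrite -[x]reprK !piE mulrDl. Qed.

HB.instance Definition _ := GRing.Zmodule_isLmodule.Build A quot_mod
  quot_scaleA quot_scale1 quot_scaleDr quot_scaleDl.

Lemma quot_modZ a x : a *: \pi_quot_mod x = \pi_quot_mod (a * x).
Proof. by rewrite /GRing.scale /= piE. Qed.

End IdealClosure.

Lemma annihilator_ideal (A : comPzRingType) (V : lmodType A) (v : V) :
  is_ideal (fun a : A => a *: v = 0).
Proof.
split; first exact: scale0r.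
split=> [a b av bv | r a av]; first by rewrite scalerDl av bv addr0.
by rewrite -scalerA av scaler0.
Qed.

Lemma quot_mod_annihilated (A : comPzRingType) (I : A -> Prop) a (q : quot_mod I) :
  I a -> a *: q = 0.
Proof.
move=> Ia; rewrite -[q]reprK quot_modZ -pi_zeror; apply/quot_mod_eqP.
rewrite subr0 mulrC; apply: idealMl (ideal_closure_ideal I) _ _ _.
exact: sub_ideal_closure.
Qed.

Section QuotientLift.
Variables (A : comPzRingType) (I : A -> Prop) (V : lmodType A) (v : V).
Hypothesis I_annihilates_v : forall a, I a -> a *: v = 0.

#[using="I_annihilates_v"]
Definition quot_lift (q : quot_mod I) : V := repr q *: v.

Lemma quot_lift_pi x : quot_lift (\pi x) = x *: v.
Proof.
apply/eqP; rewrite -subr_eq0 -scalerBl; apply/eqP.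
apply: ideal_closure_min (annihilator_ideal v) I_annihilates_v _ _.
by apply/quot_mod_eqP; rewrite reprK.
Qed.

Lemma quot_lift_is_linear : linear quot_lift.
Proof.
move=> a q r; rewrite -[q]reprK -[r]reprK.
by rewrite quot_modZ -pi_addr !quot_lift_pi scalerDl scalerA.
Qed.

HB.instance Definition _ := GRing.isLinear.Build A (quot_mod I) V *:%R quot_lift
  quot_lift_is_linear.

End QuotientLift.

Section TorsionActions.
Variables (A B : comPzRingType) (L : (A -> Prop) -> Prop).
Variables (iota : {rmorphism A -> B}) (act : forall V : lmodType A, B -> V -> V).
Hypothesis L_ideals : forall I, L I -> is_ideal I.
Hypothesis act_module : B_structures iota L act.
Hypothesis act_natural : linear_maps_B_linear L act.

Lemma quot_mod_torsion I : L I -> torsion L (quot_mod I).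
Proof. by move=> LI q; exists I; split=> // a; apply: quot_mod_annihilated. Qed.

Definition omega_of_act (b : B) (I : A -> Prop) : A :=
  repr (act b (\pi_(quot_mod I) 1)).

Lemma acts_through_omega_of_act : acts_through L act omega_of_act.
Proof.
move=> V torsV b v I LI Iv.
have := act_natural (quot_lift Iv) (quot_mod_torsion LI) torsV b (\pi 1).
rewrite /= quot_lift_pi scale1r => <-.
by rewrite /omega_of_act -{1}[act b _]reprK quot_lift_pi.
Qed.

Lemma act_quot_mod (g : B -> (A -> Prop) -> A) I :
  acts_through L act g -> L I -> forall b (q : quot_mod I), act b q = g b I *: q.
Proof.
move=> g_acts LI b q; apply: (g_acts _ (quot_mod_torsion LI) b q I LI).
by move=> a; apply: quot_mod_annihilated.
Qed.

Lemma act_quot_mod_1 (g : B -> (A -> Prop) -> A) I :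
  acts_through L act g -> L I ->
  forall b, act b (\pi_(quot_mod I) 1) = \pi_(quot_mod I) (g b I).
Proof. by move=> g_acts LI b; rewrite (act_quot_mod g_acts LI) quot_modZ mulr1. Qed.

Lemma omega_eq_of_quot_mod (x y : (A -> Prop) -> A) :
  (forall I, L I -> \pi_(quot_mod I) (x I) = \pi_(quot_mod I) (y I)) -> omega_eq L x y.
Proof.
move=> xy I LI; apply: ideal_closure_id (L_ideals LI) _.
exact/quot_mod_eqP/xy.
Qed.

Lemma omega_of_act_fam b : omega_fam L (omega_of_act b).
Proof.
move=> I J LI LJ IJ; apply: ideal_closure_id (L_ideals LJ) _; apply/quot_mod_eqP.
have I_annihilates_1 a : I a -> a *: \pi_(quot_mod J) 1 = 0.
  by move/IJ; apply: quot_mod_annihilated.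
have := acts_through_omega_of_act (quot_mod_torsion LJ) b LI I_annihilates_1.
by rewrite (act_quot_mod_1 acts_through_omega_of_act LJ) quot_modZ mulr1 => ->.
Qed.

Lemma omega_alg_morph_omega_of_act : omega_alg_morph iota L omega_of_act.
Proof.
have act_on_1 := act_quot_mod_1 acts_through_omega_of_act.
split; first exact: omega_of_act_fam.
split; [|split; [|split]] => [b c | b c | | a]; apply: omega_eq_of_quot_mod => I LI;
  have [_ [actDl [actM [act_1 act_iota]]]] := act_module (quot_mod_torsion LI);
  rewrite -(act_on_1 _ LI).
- by rewrite actDl !act_on_1 // -pi_addr.
- by rewrite actM act_on_1 // (act_quot_mod acts_through_omega_of_act LI) quot_modZ.
- by rewrite act_1.
- by rewrite act_iota quot_modZ mulr1.
Qed.

Lemma acts_through_unique (f g : B -> (A -> Prop) -> A) :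
  acts_through L act f -> acts_through L act g -> forall b, omega_eq L (f b) (g b).
Proof.
move=> f_acts g_acts b; apply: omega_eq_of_quot_mod => I LI.
by rewrite -(act_quot_mod_1 f_acts LI) (act_quot_mod_1 g_acts LI).
Qed.

End TorsionActions.

Theorem mainTheorem12 (A B : comPzRingType) (L : (A -> Prop) -> Prop)
  (iota : {rmorphism A -> B})
  (act : forall V : lmodType A, B -> V -> V) :
  good_ideal_set L ->
  injective iota ->
  B_structures iota L act ->
  linear_maps_B_linear L act ->
  (exists f : B -> (A -> Prop) -> A,
      omega_alg_morph iota L f /\ acts_through L act f) /\
  (forall f g : B -> (A -> Prop) -> A,
      omega_alg_morph iota L f -> acts_through L act f ->
      omega_alg_morph iota L g -> acts_through L act g ->
      forall b, omega_eq L (f b) (g b)).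
Proof.
move=> [_ [L_ideals _]] _ act_module act_natural; split.
  exists (omega_of_act act); split.
    exact: omega_alg_morph_omega_of_act L_ideals act_module act_natural.
  exact: acts_through_omega_of_act act_natural.
by move=> f g _ f_acts _ g_acts; exact: (acts_through_unique L_ideals f_acts g_acts).
Qed.
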